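(* Let $D=(V,E;s,t)$, $N$, $\mathscr{B}$ be as in the context, let $x\in\mathcal{C}(\widetilde\Gamma_D)$ and let $\phi_x$ be its potential. Then (i) for every $s$-$t$ path $P$, $x(N\cap P)=1+\sum_{(u,v)\in J_P}\big(\phi_x(u)-\phi_x(v)\big)$; (ii) for every cycle $C$, $x(N\cap C)=\sum_{(u,v)\in J_C}\big(\phi_x(u)-\phi_x(v)\big)$.
   Context: $D=(V,E;s,t)$ is a directed network with unit arc capacities (parallel arcs allowed); $N\subseteq E$ is the set of private arcs (players), $M=E\setminus N$ public arcs; every $s$-$t$ path contains an arc of $N$ and every arc lies on some $s$-$t$ path. A path is a set of arcs joining a sequence of distinct vertices along the same direction. Two paths are disjoint on $N$ if they share no arc of $N$; $\sigma_N$ is the maximum number of $s$-$t$ paths pairwise disjoint on $N$. For $S\subseteq N$, $\gamma(S)$ is the maximum number of pairwise arc-disjoint $s$-$t$ paths in $D_S=(V,S\cup M;s,t)$. Auxiliary game $\widetilde\Gamma_D=(N,\tilde\gamma)$: $\tilde\gamma(N)=\sigma_N$, $\tilde\gamma(S)=\gamma(S)$ for $S\subsetneq N$; core $\mathcal{C}(\widetilde\Gamma_D)=\{x\in\mathbb{R}^N_{\ge0}:x(N)=\sigma_N,\ x(S)\ge\tilde\gamma(S)\ \forall S\subseteq N\}$ with $x(S)=\sum_{i\in S}x_i$. Potential: $\phi_x(v)$ is the length of a shortest $s$-$v$ path when arcs $e\in N$ have length $x(e)$ and public arcs length $0$. Fix a maximum family $\mathscr{B}$ of $s$-$t$ paths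 pairwise disjoint on $N$; a $\mathscr{B}$-vertex is a vertex on a path of $\mathscr{B}$. A $u$-$v$ jump is a $u$-$v$ path whose end vertices are $\mathscr{B}$-vertices, with no intermediate $\mathscr{B}$-vertex, and which is not a single arc of a path of $\mathscr{B}$; $(u,v)$ is its jump pair. For an $s$-$t$ path or cycle $W$, cut $W$ at each of its $\mathscr{B}$-vertices into consecutive pieces (each going from a $\mathscr{B}$-vertex $u$ to the next $\mathscr{B}$-vertex $v$ along $W$); $J_W$ is the set of pairs $(u,v)$ of those pieces that are jumps, i.e. $W=P_0*Q_1*P_1*\cdots*Q_r*P_r$ with $P_i$ (possibly empty) subpaths of paths of $\mathscr{B}$, $Q_i$ jumps, and $J_W$ the jump pairs of $Q_1,\dots,Q_r$ ($J_W=\emptyset$ if $W$ is a cycle without $\mathscr{B}$-vertices). *)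

From HB Require Import structures.
From mathcomp Require Import all_boot all_order all_algebra.
From mathcomp Require Import boolp.
Set Implicit Arguments. Unset Strict Implicit. Unset Printing Implicit Defensive.
Import Order.TTheory GRing.Theory Num.Theory.

(* A directed network D = (V, E; s, t) with parallel arcs: arcs are elements
   of the finite type E, arc e goes from [tl e] to [hd e].  N : {set E} is the
   set of private arcs; public arcs are those not in N. *)

Section Network.
Variables (V E : finType) (tl hd : E -> V).

Fixpoint walk_from (a : V) (es : seq E) : bool :=
  if es is e :: es' then (tl e == a) && walk_from (hd e) es' else true.

Definition walk_verts (a : V) (es : seq E) : seq V := a :: map hd es.

Definition is_path (a b : V) (es : seq E) : bool :=
  [&& walk_from a es, uniq (walk_verts a es) & last a (map hd es) == b].

Definition is_cycle (a : V) (es : seq E) : bool :=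
  [&& es != [::], walk_from a es, last a (map hd es) == a & uniq (map hd es)].

Variables (s t : V) (N : {set E}).

Definition every_st_path_has_private : Prop :=
  forall es, is_path s t es -> exists2 e, e \in N & e \in es.
Definition every_arc_on_st_path : Prop :=
  forall e : E, exists2 es, is_path s t es & e \in es.

Definition N_disjoint_family (F : seq (seq E)) : Prop :=
  (forall P, P \in F -> is_path s t P) /\
  (forall i j, (i < j < size F)%N ->
     forall e, e \in N -> e \in nth [::] F i -> e \notin nth [::] F j).

(* a family of pairwise arc-disjoint s-t paths in D_S = (V, S u M; s, t) *)
Definition S_arc_disjoint_family (S : {set E}) (F : seq (seq E)) : Prop :=
  (forall P, P \in F -> is_path s t P /\ forall e, e \in P -> (e \in S) || (e \notin N)) /\
  (forall i j, (i < j < size F)%N ->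
     forall e, e \in nth [::] F i -> e \notin nth [::] F j).

(* Under the
   standing assumption every such path has a private arc, so this number is
   at most #|N| <= #|E|; the max is taken over k <= #|E|. *)
Definition sigmaN : nat :=
  \max_(k < #|E|.+1 | `[< exists2 F, N_disjoint_family F & size F = k >]) k.

(* gamma(S) : maximum number of pairwise arc-disjoint s-t paths in D_S
   (each such path is nonempty since s <> t, so it is at most #|E|). *)
Definition gamma (S : {set E}) : nat :=
  \max_(k < #|E|.+1 | `[< exists2 F, S_arc_disjoint_family S F & size F = k >]) k.

Definition gamma_tilde (S : {set E}) : nat :=
  if S == N then sigmaN else gamma S.

Definition max_family (B : seq (seq E)) : Prop :=
  N_disjoint_family B /\ size B = sigmaN.

Local Open Scope ring_scope.
Variable R : realFieldType.

Definition xsum (x : E -> R) (S : {set E}) : R := \sum_(e in S) x e.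

(* the core C(tilde Gamma_D); x is only meaningful on N *)
Definition in_core (x : E -> R) : Prop :=
  (forall e, e \in N -> 0 <= x e) /\
  xsum x N = (sigmaN)%:R /\
  (forall S : {set E}, S \subset N -> (gamma_tilde S)%:R <= xsum x S).

Definition plen (x : E -> R) (es : seq E) : R :=
  \sum_(e <- es) (if e \in N then x e else 0).

Definition is_potential (x : E -> R) (phi : V -> R) : Prop :=
  forall v, (exists es, is_path s v es) ->
    (exists2 es, is_path s v es & plen x es = phi v) /\
    (forall es, is_path s v es -> phi v <= plen x es).

Definition xN (x : E -> R) (es : seq E) : R :=
  \sum_(e | (e \in N) && (e \in es)) x e.

Variable B : seq (seq E).

(* B-vertices: vertices on a path of B (paths of B start at s) *)
Definition isBv (v : V) : bool := has (fun P => v \in walk_verts s P) B.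

(* cutting a walk at its B-vertices: [pieces_aux u cur es] continues a piece
   started at the B-vertex u with arcs cur so far; a piece is
   (start B-vertex, end B-vertex, arcs of the piece) *)
Fixpoint pieces_aux (u : V) (cur : seq E) (es : seq E) : seq (V * V * seq E) :=
  if es is e :: es' then
    if isBv (hd e) then (u, hd e, rcons cur e) :: pieces_aux (hd e) [::] es'
    else pieces_aux u (rcons cur e) es'
  else [::].

(* pieces of a path (a, es): the part before the first and after the last
   B-vertex is not a piece *)
Fixpoint path_pieces (a : V) (es : seq E) : seq (V * V * seq E) :=
  if isBv a then pieces_aux a [::] es
  else if es is e :: es' then path_pieces (hd e) es' else [::].

Definition cycle_pieces (a : V) (es : seq E) : seq (V * V * seq E) :=
  let vs := walk_verts a es in
  let i := find isBv vs in
  if (i < size es)%N then pieces_aux (nth a vs i) [::] (rot i es) else [::].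

Definition is_jump (pc : V * V * seq E) : bool :=
  if pc.2 is [:: e] then ~~ has (fun P => e \in P) B else true.

Definition jump_pairs (pcs : seq (V * V * seq E)) : seq (V * V) :=
  undup [seq pc.1 | pc <- pcs & is_jump pc].

Definition J_path (a : V) (es : seq E) := jump_pairs (path_pieces a es).
Definition J_cycle (a : V) (es : seq E) := jump_pairs (cycle_pieces a es).

End Network.

From HB Require Import structures.
From mathcomp Require Import all_boot all_order all_algebra.
From mathcomp Require Import boolp.
From mathcomp Require Import ring.
Import Order.TTheory GRing.Theory Num.Theory.
Set Implicit Arguments. Unset Strict Implicit. Unset Printing Implicit Defensive.

(* Every s-t path has x-length at least 1 (core inequality for its private
   arcs), while the sigma_N paths of B, being N-disjoint, share x(N) = sigma_N.
   Hence each path of B has x-length exactly 1 and x vanishes on the private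
   arcs off B.  A shorter s-v path to a vertex v of a path Q of B, followed by
   the rest of Q, would yield an s-t path of length < 1; so phi_x grows along
   Q exactly by the arc lengths, with phi_x(s) = 0 and phi_x(t) = 1.  Cut a
   path or cycle at its B-vertices: a non-jump piece u-v is an arc of B, of
   length phi_x(v) - phi_x(u); a jump has length 0, which we write as
   (phi_x(v) - phi_x(u)) + (phi_x(u) - phi_x(v)).  The first terms telescope
   to phi_x(t) - phi_x(s) = 1 for a path and to 0 for a cycle. *)

Lemma nth_cons_last_take (T : Type) (a : T) (l : seq T) i : (i <= size l)%N ->
  nth a (a :: l) i = last a (take i l).
Proof. by elim: l a i => [|y l IH] a [|i] //= il; rewrite (set_nth_default y) ?IH. Qed.

Lemma subseq_belast (T : eqType) (u y : T) (l : seq T) :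
  subseq (belast u l) (u :: belast y l).
Proof.
case: l => [|z l] //; rewrite -[belast u _]cat1s -[u :: _]cat1s.
exact: cat_subseq (subseq_refl _) (subseq_cons _ _).
Qed.

Lemma perm_belast_last (T : eqType) (u : T) (l : seq T) :
  last u l = u -> perm_eq (belast u l) l.
Proof. by move=> lu; rewrite -(perm_cons u) [u :: l]lastI lu perm_sym perm_rcons. Qed.

Section Walks.
Variables (V E : finType) (tl hd : E -> V).

Lemma walk_from_cat a p1 p2 :
  walk_from tl hd a (p1 ++ p2) =
  walk_from tl hd a p1 && walk_from tl hd (last a (map hd p1)) p2.
Proof. by elim: p1 a => [|e p1 IH] a //=; rewrite IH andbA. Qed.

Lemma is_path_uniq a b p : is_path tl hd a b p -> uniq p.
Proof. by case/and3P => _ /= /andP[_ /map_uniq]. Qed.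

Lemma is_path_cat a b p1 p2 : is_path tl hd a b (p1 ++ p2) ->
  is_path tl hd a (last a (map hd p1)) p1 /\
  is_path tl hd (last a (map hd p1)) b p2.
Proof.
rewrite /is_path walk_from_cat /walk_verts map_cat last_cat.
case/and3P => /andP[w1 w2] u /eqP <-; rewrite w1 w2 eqxx /=.
move: u; rewrite -cat_cons cat_uniq => /and3P[u1 /hasPn h u2].
rewrite -[_ && uniq _]/(uniq (a :: _)) u1 u2 eqxx /=; split => //.
by rewrite !andbT; apply/negP => /h; rewrite mem_last.
Qed.

Lemma walk_verts_split a v p : v \in walk_verts hd a p ->
  exists p1 p2, p = p1 ++ p2 /\ last a (map hd p1) = v.
Proof.
rewrite inE => /orP[/eqP->|]; first by exists [::], p.
case/mapP => f /splitPr[p1 p2] ->.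
by exists (rcons p1 f), p2; rewrite cat_rcons map_rcons last_rcons.
Qed.

Lemma walk_subseq_path a es : walk_from tl hd a es ->
  exists2 p, subseq p es & is_path tl hd a (last a (map hd es)) p.
Proof.
elim: es a => [|e es IH] a.
  by move=> _; exists [::] => //; rewrite /is_path /= eqxx.
rewrite [walk_from _ _ _ _]/= => /andP[/eqP tle /IH[p sp pp]].
have -> : last a (map hd (e :: es)) = last (hd e) (map hd es) by [].
case: (boolP (a \in walk_verts hd (hd e) p)) => [/walk_verts_split | ha].
  case=> p1 [p2 [dp lp]]; rewrite dp in pp sp; have [_ pp2] := is_path_cat pp.
  exists p2; last by rewrite -lp.
  exact: subseq_trans (suffix_subseq p1 p2) (subseq_trans sp (subseq_cons _ _)).
exists (e :: p); first by rewrite /= eqxx.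
move: pp ha; rewrite /is_path /walk_verts /= tle eqxx /=.
by case/and3P => -> /andP[-> ->] -> ->.
Qed.

Lemma is_cycle_rot a C i : is_cycle tl hd a C -> (i < size C)%N ->
  is_cycle tl hd (nth a (walk_verts hd a C) i) (rot i C).
Proof.
case/and4P => Cn wC /eqP lC uC iC.
have w0E : nth a (walk_verts hd a C) i = last a (map hd (take i C)).
  by rewrite nth_cons_last_take ?size_map ?(ltnW iC) // map_take.
rewrite w0E; set w0 := last a _.
have /andP[w1 w2] : walk_from tl hd a (take i C) && walk_from tl hd w0 (drop i C).
  by rewrite -walk_from_cat cat_take_drop.
have ld : last w0 (map hd (drop i C)) = a.
  by rewrite -last_cat -map_cat cat_take_drop.
rewrite /is_cycle /rot walk_from_cat w2 ld w1 map_cat last_cat ld eqxx /=.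
by rewrite -map_cat -/(rot i C) -size_eq0 size_rot size_eq0 Cn map_rot rot_uniq.
Qed.

Lemma size_walk_verts a p : size (walk_verts hd a p) = (size p).+1.
Proof. by rewrite /= size_map. Qed.

Lemma is_cycle_find_lt a C (p : pred V) : is_cycle tl hd a C ->
  has p (walk_verts hd a C) -> (find p (walk_verts hd a C) < size C)%N.
Proof.
case/and4P; rewrite -size_eq0 -(size_map hd) size_eq0 /walk_verts => + _ + _.
case/lastP: (map hd C) => // l z _; rewrite last_rcons => /eqP-> /=.
rewrite size_rcons has_rcons; case: ifP => // pa /= hl.
by rewrite -cats1 find_cat hl ltnS -has_find.
Qed.

End Walks.

Local Open Scope ring_scope.

Section Pieces.
Variables (V E : finType) (hd : E -> V) (s : V) (B : seq (seq E)).

Lemma pieces_aux_starts u cur es :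
  subseq [seq pc.1.1 | pc <- pieces_aux hd s B u cur es] (belast u (map hd es)).
Proof.
elim: es u cur => [|e es IH] u cur //=; case: ifP => _.
  by rewrite /= eqxx IH.
exact: subseq_trans (IH u _) (subseq_belast _ _ _).
Qed.

Lemma sum_jump_pairs (M : nmodType) (F : V * V -> M) pcs :
  uniq [seq pc.1.1 | pc <- pcs] ->
  \sum_(uv <- jump_pairs B pcs) F uv = \sum_(pc <- pcs | is_jump B pc) F pc.1.
Proof.
move=> u; rewrite /jump_pairs undup_id ?big_map ?big_filter //.
apply: (@map_uniq _ _ fst); rewrite -map_comp.
exact: subseq_uniq (map_subseq _ (filter_subseq _ _)) u.
Qed.

End Pieces.

Section PathLength.
Variables (R : realFieldType) (E : finType) (N : {set E}) (x : E -> R).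

Lemma plen_cat p q : plen N x (p ++ q) = plen N x p + plen N x q.
Proof. exact: big_cat. Qed.

Lemma xN_plen p : uniq p -> xN N x p = plen N x p.
Proof.
move=> up; rewrite /plen big_uniq // -big_mkcondr /=.
by apply: eq_bigl => e; rewrite andbC.
Qed.

Lemma sum_xN_N_disjoint (F : seq (seq E)) :
  (forall i j, (i < j < size F)%N ->
     forall e, e \in N -> e \in nth [::] F i -> e \notin nth [::] F j) ->
  \sum_(Q <- F) xN N x Q = \sum_(e | (e \in N) && has (fun Q => e \in Q) F) x e.
Proof.
elim: F => [|Q F IH] Hd.
  by rewrite big_nil big_pred0 // => e; rewrite andbF.
rewrite big_cons IH => [|i j ij]; last exact: (Hd i.+1 j.+1).
rewrite [RHS](bigID (fun e => e \in Q)) /=; congr (_ + _); apply: eq_bigl => e.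
  by case: (e \in N) (e \in Q) => [] [] //=; rewrite andbF.
case eN: (e \in N) => //=; case eQ: (e \in Q) => /=; last by rewrite andbT.
apply/negP => /hasP[Q' Q'F eQ'].
have := Hd 0%N (index Q' F).+1; rewrite /= ltnS index_mem Q'F nth_index //.
by move=> /(_ isT e eN eQ); rewrite eQ'.
Qed.

Hypothesis x_ge0 : forall e, e \in N -> 0 <= x e.

Lemma plen_ge0 es : 0 <= plen N x es.
Proof. by apply: sumr_ge0 => e _; case: ifP => // /x_ge0. Qed.

Lemma plen_subseq p q : subseq p q -> plen N x p <= plen N x q.
Proof.
case/perm_to_subseq => r qr; rewrite /plen (perm_big _ qr) -/(plen N x (p ++ r)).
by rewrite plen_cat lerDl plen_ge0.
Qed.

End PathLength.

Lemma bigmax_family_size_gt0 (E : finType) (Fam : seq (seq E) -> Prop) (P : seq E) :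
  P != [::] -> Fam [:: P] ->
  (0 < \max_(k < #|E|.+1 | `[< exists2 F, Fam F & size F = k >]) k)%N.
Proof.
case: P => // e P _ FP.
have E1 : (1 < #|E|.+1)%N by rewrite ltnS; apply/card_gt0P; exists e.
apply: leq_trans (leq_bigmax_cond (Ordinal E1) _) => //.
by apply/asboolP; exists [:: e :: P].
Qed.

Section Core.
Variables (R : realFieldType) (V E : finType) (tl hd : E -> V) (s t : V).
Variables (N : {set E}) (x : E -> R).
Hypothesis HN : every_st_path_has_private tl hd s t N.
Hypothesis Hx : in_core tl hd s t N x.

Let x_ge0 : forall e, e \in N -> 0 <= x e := Hx.1.

Lemma st_path_nonnil P : is_path tl hd s t P -> P != [::].
Proof. by case: P => // /HN[]. Qed.

Lemma N_disjoint_family1 P : is_path tl hd s t P -> N_disjoint_family tl hd s t N [:: P].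
Proof.
move=> pP; split=> [Q /[1!inE] /eqP-> // | i j /andP[ij] /=].
by rewrite ltnS leqn0 => /eqP j0; rewrite j0 in ij.
Qed.

Lemma S_arc_disjoint_family1 (S : {set E}) P : is_path tl hd s t P ->
  (forall e, e \in P -> (e \in S) || (e \notin N)) ->
  S_arc_disjoint_family tl hd s t N S [:: P].
Proof.
move=> pP PS; split=> [Q /[1!inE] /eqP-> // | i j /andP[ij] /=].
by rewrite ltnS leqn0 => /eqP j0; rewrite j0 in ij.
Qed.

Lemma sigmaN_gt0 P : is_path tl hd s t P -> (0 < sigmaN tl hd s t N)%N.
Proof.
move=> pP; apply: bigmax_family_size_gt0 (st_path_nonnil pP) _.
exact: N_disjoint_family1.
Qed.

Lemma st_path_xN_ge1 P : is_path tl hd s t P -> 1 <= xN N x P.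
Proof.
move=> pP; pose S := [set e in N | e \in P].
have SN : S \subset N by apply/subsetP => e; rewrite inE => /andP[].
have -> : xN N x P = xsum x S by apply: eq_bigl => e; rewrite inE.
apply: le_trans (Hx.2.2 S SN); rewrite ler1n /gamma_tilde; case: ifP => _.
  exact: sigmaN_gt0 pP.
apply: bigmax_family_size_gt0 (st_path_nonnil pP) _.
by apply: S_arc_disjoint_family1 => // e eP; rewrite inE eP andbT orbN.
Qed.

Variable B : seq (seq E).
Hypothesis HB : max_family tl hd s t N B.

Lemma max_family_slack :
  \sum_(Q <- B) (xN N x Q - 1) + \sum_(e in N | ~~ has (fun Q => e \in Q) B) x e = 0.
Proof.
have [[_ Bd] Bs] := HB.
rewrite sumrB sum_xN_N_disjoint // addrAC -bigID -/(xsum x N) Hx.2.1 -Bs.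
by rewrite -sum1_size natr_sum subrr.
Qed.

Lemma max_family_tight :
  (forall Q, Q \in B -> xN N x Q = 1) /\
  (forall e, e \in N -> ~~ has (fun Q => e \in Q) B -> x e = 0).
Proof.
have [[Bp _] _] := HB.
have excess_ge0 Q : Q \in B -> 0 <= xN N x Q - 1.
  by move/Bp/st_path_xN_ge1; rewrite subr_ge0.
have off_ge0 e : (e \in N) && ~~ has (fun Q => e \in Q) B -> 0 <= x e.
  by case/andP => /x_ge0.
have /eqP := max_family_slack; rewrite big_seq paddr_eq0 ?sumr_ge0 //.
case/andP; rewrite psumr_eq0 // => /allP excess0 /eqP off0; split=> [Q QB|e eN eB].
  by apply/eqP; rewrite -subr_eq0; apply: (implyP (excess0 Q QB)).
by apply: (psumr_eq0P off_ge0 off0); rewrite eN.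
Qed.

Variable phi : V -> R.
Hypothesis Hphi : is_potential tl hd s N x phi.

Local Notation isB := (isBv hd s B).
Let arc_len e := if e \in N then x e else 0.

Lemma potential_max_family Q1 Q2 : Q1 ++ Q2 \in B ->
  phi (last s (map hd Q1)) = plen N x Q1.
Proof.
move=> QB; have [[Bp _] _] := HB; have pQ := Bp _ QB.
have := max_family_tight.1 _ QB; rewrite (xN_plen _ _ (is_path_uniq pQ)) plen_cat.
move=> len1; have [pQ1 pQ2] := is_path_cat pQ.
have [[R1 pR1 <-] phi_min] := Hphi (ex_intro _ Q1 pQ1).
apply/eqP; rewrite eq_le phi_min //=.
case/and3P: pR1 => wR1 _ /eqP lR1; case/and3P: pQ2 => wQ2 _ /eqP lQ2.
have : walk_from tl hd s (R1 ++ Q2) by rewrite walk_from_cat wR1 lR1 wQ2.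
case/walk_subseq_path => P' sP'; rewrite map_cat last_cat lR1 lQ2 => pP'.
have := st_path_xN_ge1 pP'; rewrite (xN_plen _ _ (is_path_uniq pP')) -len1.
by move/le_trans/(_ (plen_subseq x_ge0 sP')); rewrite plen_cat lerD2r.
Qed.

Lemma arc_max_family Q e : Q \in B -> e \in Q ->
  [/\ arc_len e = phi (hd e) - phi (tl e), isB (tl e) & isB (hd e)].
Proof.
move=> QB eQ; case/splitPr: eQ QB => p1 p2 QB; have [[Bp _] _] := HB.
have /and3P[+ _ _] := Bp _ QB; rewrite walk_from_cat /= => /andP[_ /andP[/eqP tle _]].
split.
- rewrite tle (potential_max_family QB).
  have : rcons p1 e ++ p2 \in B by rewrite cat_rcons.
  move/potential_max_family; rewrite map_rcons last_rcons => ->.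
  by rewrite -cats1 plen_cat [plen N x p1 + _]addrC addrK /plen big_seq1.
- apply/hasP; exists (p1 ++ e :: p2) => //.
  by rewrite tle /walk_verts map_cat -cat_cons mem_cat mem_last.
- apply/hasP; exists (p1 ++ e :: p2) => //.
  by rewrite inE map_f ?orbT // mem_cat mem_head orbT.
Qed.

Lemma arc_len_eq0 e : ~~ isB (tl e) || ~~ isB (hd e) -> arc_len e = 0.
Proof.
move=> nB; rewrite /arc_len; case: ifP => // eN; apply: max_family_tight.2 eN _.
by apply/hasP => -[Q QB /(arc_max_family QB)[_ tlB hdB]]; rewrite tlB hdB in nB.
Qed.

Lemma plen_piece u cur e : tl e = last u (map hd cur) ->
  all (fun f => ~~ isB (hd f)) cur ->
  plen N x (rcons cur e) = phi (hd e) - phi u +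
    (if is_jump B (u, hd e, rcons cur e) then phi u - phi (hd e) else 0).
Proof.
case: cur => [|c cur] tle hall.
  rewrite /plen big_seq1 -/(arc_len e) /is_jump /=.
  case: hasP => [[Q QB /(arc_max_family QB)[-> _ _]] | noQ]; first by rewrite tle addr0.
  rewrite addrA subrK subrr /arc_len; case: ifP => // eN.
  exact: max_family_tight.2 eN (introN hasP noQ).
have -> : is_jump B (u, hd e, rcons (c :: cur) e) by case: (cur) {tle hall}.
rewrite addrA subrK subrr /plen big1_seq // => f /andP[_].
rewrite mem_rcons inE => /orP[/eqP-> | fc]; apply: arc_len_eq0; last first.
  by rewrite (allP hall f fc) orbT.
have : tl e \in map hd (c :: cur) by rewrite tle /= mem_last.
by case/mapP => g gc ->; rewrite (allP hall g gc).
Qed.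

(* [cur] holds the arcs already traversed of the currently open piece. *)
Lemma plen_pieces_aux u cur es :
  walk_from tl hd (last u (map hd cur)) es ->
  all (fun f => ~~ isB (hd f)) cur ->
  (es = [::] -> cur = [::]) ->
  isB (last u (map hd (cur ++ es))) ->
  plen N x (cur ++ es) = phi (last u (map hd (cur ++ es))) - phi u +
    \sum_(pc <- pieces_aux hd s B u cur es | is_jump B pc) (phi pc.1.1 - phi pc.1.2).
Proof.
elim: es u cur => [|e es IH] u cur wk hall hnil hB.
  by rewrite (hnil erefl) /plen !big_nil subrr addr0.
rewrite [pieces_aux _ _ _ _ _ _]/=; move: wk => /= /andP[/eqP tle wk].
have dcat : cur ++ e :: es = rcons cur e ++ es by rewrite cat_rcons.
case: ifP => hBe.
  have lst : last u (map hd (cur ++ e :: es)) = last (hd e) (map hd es).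
    by rewrite map_cat last_cat.
  rewrite lst in hB *; rewrite big_cons dcat plen_cat (plen_piece tle hall).
  rewrite (IH (hd e) [::] wk isT (fun _ => erefl) hB).
  by case: (is_jump B _); ring.
case: es IH wk hnil hB dcat => [|f es] IH wk hnil hB dcat.
  by rewrite cats1 map_rcons last_rcons hBe in hB.
rewrite dcat; apply: IH => //.
- by rewrite map_rcons last_rcons.
- by rewrite all_rcons hBe hall.
- by rewrite -dcat.
Qed.

Lemma plen_walk_pieces u es : walk_from tl hd u es -> isB (last u (map hd es)) ->
  plen N x es = phi (last u (map hd es)) - phi u +
    \sum_(pc <- pieces_aux hd s B u [::] es | is_jump B pc) (phi pc.1.1 - phi pc.1.2).
Proof. by move=> wk hB; exact: (@plen_pieces_aux u [::] es wk isT (fun _ => erefl) hB). Qed.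

Lemma xN_st_path P : is_path tl hd s t P ->
  xN N x P = 1 + \sum_(uv <- J_path hd s B s P) (phi uv.1 - phi uv.2).
Proof.
move=> pP; have [[Bp _] Bs] := HB.
have QB : nth [::] B 0 \in B by apply: mem_nth; rewrite Bs; exact: sigmaN_gt0 pP.
set Q := nth [::] B 0 in QB; have /and3P[_ _ /eqP lQ] := Bp _ QB.
have sB : isB s by apply/hasP; exists Q; rewrite // mem_head.
have tB : isB t by apply/hasP; exists Q; rewrite // -lQ mem_last.
have phi_s : phi s = 0 by have := @potential_max_family [::] Q QB; rewrite /plen big_nil.
have phi_t : phi t = 1.
  rewrite -lQ (@potential_max_family Q [::]) ?cats0 //.
  by rewrite -(xN_plen _ _ (is_path_uniq (Bp _ QB))) (max_family_tight.1 _ QB).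
case/and3P: (pP) => wP uP /eqP lP.
have -> : J_path hd s B s P = jump_pairs B (pieces_aux hd s B s [::] P).
  by case: (P) => [|? ?]; rewrite /J_path /= sB.
rewrite sum_jump_pairs; last first.
  apply: subseq_uniq (pieces_aux_starts _ _ _ _ _ _) _.
  by move: uP; rewrite /walk_verts lastI rcons_uniq => /andP[].
rewrite (xN_plen _ _ (is_path_uniq pP)) (plen_walk_pieces wP) lP ?phi_s ?phi_t //.
by rewrite subr0.
Qed.

Lemma xN_cycle a C : is_cycle tl hd a C ->
  xN N x C = \sum_(uv <- J_cycle hd s B a C) (phi uv.1 - phi uv.2).
Proof.
move=> cC; have uC : uniq C by case/and4P: cC => _ _ _ /map_uniq.
rewrite /J_cycle /cycle_pieces (xN_plen _ _ uC) /=.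
have [hasB | noB] := boolP (has isB (walk_verts hd a C)).
  have iC := is_cycle_find_lt cC hasB; rewrite iC.
  have /and4P[_ wr /eqP lr ur] := is_cycle_rot cC iC.
  rewrite sum_jump_pairs; last first.
    apply: subseq_uniq (pieces_aux_starts _ _ _ _ _ _) _.
    by rewrite (perm_uniq (perm_belast_last lr)).
  have rC : perm_eq (rot (find isB (walk_verts hd a C)) C) C by rewrite perm_rot.
  rewrite /plen -(perm_big _ rC) -/(plen N x _) (plen_walk_pieces wr) lr ?subrr ?add0r //.
  exact: nth_find.
have -> : (find isB (walk_verts hd a C) < size C)%N = false.
  by apply: contraNF noB => /ltnW; rewrite has_find size_walk_verts ltnS.
rewrite /jump_pairs big_nil /plen big1_seq // => f /andP[_ fC]; apply: arc_len_eq0.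
by apply/orP; right; apply: (hasPn noB); rewrite inE map_f ?orbT.
Qed.

End Core.

Theorem lemma10 (R : realFieldType) (V E : finType) (tl hd : E -> V)
  (s t : V) (N : {set E})
  (HN : every_st_path_has_private tl hd s t N)
  (Harc : every_arc_on_st_path tl hd s t)
  (B : seq (seq E)) (HB : max_family tl hd s t N B)
  (x : E -> R) (Hx : in_core tl hd s t N x)
  (phi : V -> R) (Hphi : is_potential tl hd s N x phi) :
  (forall P : seq E, is_path tl hd s t P ->
     xN N x P = 1 + \sum_(uv <- J_path hd s B s P) (phi uv.1 - phi uv.2)) /\
  (forall (a : V) (C : seq E), is_cycle tl hd a C ->
     xN N x C = \sum_(uv <- J_cycle hd s B a C) (phi uv.1 - phi uv.2)).
Proof.
exact: conj (xN_st_path HN Hx HB Hphi) (xN_cycle HN Hx HB Hphi).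
Qed.
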